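(* For $\beta\in\mathcal D$ let $\mathcal C_\beta=\{\alpha\in\mathcal C:\mathrm{supp}\,\alpha\subseteq\mathrm{supp}\,\beta\}$, viewed as a code of length $|\beta|$ on $\mathrm{supp}\,\beta$. Then: (1) if $|\beta|=16$, $\mathcal C_\beta\cong\mathrm{RM}(2,4)$; (2) if $|\beta|=24$, $\mathcal C_\beta\cong\{(\alpha,\gamma,\delta)\in(\mathbb Z_2^8)^3:\alpha,\gamma,\delta\text{ even},\ \alpha+\gamma+\delta\in H_8\}$; (3) if $|\beta|=32$, $\mathcal C_\beta\cong\mathrm{RM}(3,5)$; (4) if $|\beta|=48$, $\mathcal C_\beta=\mathcal C$. Consequently, for $\beta\neq0$, $\mathcal C_\beta$ contains a subcode which is self-dual in $\mathbb Z_2^{\mathrm{supp}\,\beta}$ and isomorphic to a direct sum of $|\beta|/8$ copies of $H_8$.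
   Context: $\mathcal D\subseteq\mathbb Z_2^{48}$ is spanned by $1^{16}0^{32}$, $0^{16}1^{16}0^{16}$, $0^{32}1^{16}$, $(0^81^8)^3$, $(0^41^4)^6$, $(0011)^{12}$, $(0101)^{12}$; its nonzero weights are $16,24,32,48$. $\mathcal C=\mathcal D^\perp$. $\mathrm{RM}(r,m)$ denotes the $r$-th order binary Reed–Muller code of length $2^m$. $H_8$ is the extended Hamming $[8,4,4]$ code spanned by $11111111$, $11110000$, $11001100$, $10101010$ (so $H_8\cong\mathrm{RM}(1,3)$). Isomorphism of codes means equality up to a permutation of coordinates. *)

From HB Require Import structures.
From mathcomp Require Import all_boot all_order all_algebra.
Set Implicit Arguments. Unset Strict Implicit. Unset Printing Implicit Defensive.
Import GRing.Theory.
Local Open Scope ring_scope.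

Notation word n := 'rV['F_2]_n.

Definition supp n (v : word n) : {set 'I_n} := [set i | v 0 i != 0].
Definition wt n (v : word n) : nat := #|supp v|.

Definition dot n (u v : word n) : 'F_2 := (u *m v^T) 0 0.

Definition span_of n k (g : 'I_k -> word n) : {set word n} :=
  [set \sum_(i < k) c i *: g i | c : {ffun 'I_k -> 'F_2}].

Definition gD (k : 'I_7) : word 48 :=
  \row_(i < 48)
   (match val k with
    | 0 => (i < 16)%N
    | 1 => (16 <= i < 32)%N
    | 2 => (32 <= i)%N
    | 3 => odd (i %/ 8)
    | 4 => odd (i %/ 4)
    | 5 => odd (i %/ 2)
    | _ => odd i
    end)%:R.

Definition D : {set word 48} := span_of gD.
Definition C : {set word 48} := [set a | [forall b in D, dot a b == 0]].

Definition Cb (beta : word 48) : {set word 48} :=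
  [set a in C | supp a \subset supp beta].

(* Isomorphism (up to coordinate permutation) of a code A of length N living on
   the coordinate set S with a code B of length n: a bijection sigma from 'I_n onto S
   such that restricting A along sigma gives exactly B. *)
Definition restr N n (sigma : 'I_n -> 'I_N) (a : word N) : word n :=
  \row_(j < n) a 0 (sigma j).
Definition code_iso N (S : {set 'I_N}) (A : {set word N}) n (B : {set word n}) : Prop :=
  exists sigma : 'I_n -> 'I_N,
    [/\ injective sigma, (forall i, (i \in S) = (i \in codom sigma))
      & [set restr sigma a | a in A] = B].

(* Reed-Muller code RM(r,m): coordinates j < 2^m identified with points of F_2^m
   via binary digits; spanned by evaluations of monomials of degree <= r. *)
Definition monom m (T : {set 'I_m}) : word (2 ^ m) :=
  \row_(j < 2 ^ m) \prod_(i in T) (odd (j %/ 2 ^ i))%:R.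
Definition RM (r m : nat) : {set word (2 ^ m)} :=
  [set \sum_(T : {set 'I_m} | (#|T| <= r)%N) c T *: monom T
     | c : {ffun {set 'I_m} -> 'F_2}].

Definition gH (k : 'I_4) : word 8 :=
  \row_(i < 8)
   (match val k with
    | 0 => true
    | 1 => (i < 4)%N
    | 2 => ~~ odd (i %/ 2)
    | _ => ~~ odd i
    end)%:R.
Definition H8 : {set word 8} := span_of gH.

Definition blk n (v : word n) (k : nat) : word 8 :=
  \row_(t < 8) (if insub (k * 8 + t)%N is Some i then v 0 i else 0).

Definition Code24 : {set word 24} :=
  [set v | [forall k : 'I_3, ~~ odd (wt (blk v k))]
           && (blk v 0 + blk v 1 + blk v 2 \in H8)].

Definition H8sum (k : nat) : {set word (8 * k)} :=
  [set v | [forall b : 'I_k, blk v b \in H8]].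

Definition self_dual_on N (S : {set 'I_N}) (A : {set word N}) : Prop :=
  A = [set a | (supp a \subset S) && [forall b in A, dot a b == 0]].

(* D has only 128 codewords, so the proposition is checked codeword by codeword.
   Restricting to supp beta identifies C_beta with the dual, inside F_2^(supp beta), of
   the span of the restricted generators of D.  Hence C_beta is isomorphic to a code B as
   soon as these restrictions span the dual of B: RM(2,4) and RM(3,5) are the duals of
   RM(1,4) and RM(1,5), and the dual of the length-24 code is spanned by the three block
   indicators and the triplicated generators of H_8.  Likewise, when the restricted
   generators lie in the self-dual code H_8^(|beta|/8) (blocks of eight consecutive
   support positions), its extension by zero is a self-dual subcode of C_beta.  The
   finitely many span identities involved are decided by computing on Boolean tables. *)

From mathcomp Require Import all_boot all_order all_algebra.
From mathcomp Require Import zify.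
Set Implicit Arguments. Unset Strict Implicit. Unset Printing Implicit Defensive.
Import GRing.Theory.
Local Open Scope ring_scope.

Lemma F2_boolE (x : 'F_2) : x = (x != 0)%:R.
Proof. by case: x => [[|[|]]] //= i; apply/val_inj. Qed.

Lemma F2_natr_odd n : (n%:R : 'F_2) = (odd n)%:R.
Proof. by rewrite -(GRing.natr_mod_pchar (p := 2)) ?modn2. Qed.

Lemma F2_bool_neq0 (b : bool) : ((b%:R : 'F_2) != 0) = b.
Proof. by case: b; rewrite ?oner_eq0 ?eqxx. Qed.

Lemma F2_mul_bool (a b : bool) : (a%:R * b%:R : 'F_2) = (a && b)%:R.
Proof. by case: a; case: b; rewrite ?mulr1 ?mulr0. Qed.

Lemma F2_sum_bool (I : Type) (r : seq I) (F : pred I) :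
  \sum_(i <- r) ((F i)%:R : 'F_2) = (odd (count F r))%:R.
Proof.
rewrite -F2_natr_odd -natr_sum; congr _%:R.
by elim: r => [|x r IHr]; rewrite ?big_nil // big_cons IHr.
Qed.

Lemma F2_sum_ord_bool n (F : pred nat) :
  \sum_(i < n) ((F i)%:R : 'F_2) = (odd (count F (iota 0 n)))%:R.
Proof.
by rewrite -(big_mkord xpredT (fun i => (F i)%:R)) /index_iota subn0 F2_sum_bool.
Qed.

Section Dot.
Variable n : nat.
Implicit Types x y z : word n.

Lemma dotE x y : dot x y = \sum_i x 0 i * y 0 i.
Proof. by rewrite /dot !mxE; apply: eq_bigr => i _; rewrite mxE. Qed.

Lemma dotC x y : dot x y = dot y x.
Proof. by rewrite !dotE; apply: eq_bigr => i _; rewrite mulrC. Qed.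

Lemma dotDr x y z : dot x (y + z) = dot x y + dot x z.
Proof. by rewrite !dotE -big_split; apply: eq_bigr => i _; rewrite mxE mulrDr. Qed.

Lemma dotZr x y c : dot x (c *: y) = c * dot x y.
Proof. by rewrite !dotE mulr_sumr; apply: eq_bigr => i _; rewrite mxE mulrCA. Qed.

Lemma dot0r x : dot x 0 = 0.
Proof. by rewrite dotE big1 // => i _; rewrite mxE mulr0. Qed.

Lemma dot_sumr x (I : Type) (r : seq I) (P : pred I) (F : I -> word n) :
  dot x (\sum_(i <- r | P i) F i) = \sum_(i <- r | P i) dot x (F i).
Proof. exact: (big_morph _ (dotDr x) (dot0r x)). Qed.

End Dot.

Definition perp n k (h : 'I_k -> word n) : {set word n} :=
  [set x | [forall l, dot x (h l) == 0]].

Section Perp.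
Variables (n k : nat) (h : 'I_k -> word n).

Lemma perpP x : reflect (forall l, dot x (h l) = 0) (x \in perp h).
Proof. by rewrite inE; apply: (iffP forallP) => H l; apply/eqP. Qed.

Lemma mem_span_gen l : h l \in span_of h.
Proof.
apply/imsetP; exists [ffun l' => (l' == l)%:R] => //.
rewrite (bigD1 l) //= big1 => [|l' /negbTE nel]; last by rewrite ffunE nel scale0r.
by rewrite ffunE eqxx scale1r addr0.
Qed.

Lemma dot_perp_span x v : x \in perp h -> v \in span_of h -> dot x v = 0.
Proof.
move=> /perpP xh /imsetP[c _ ->]; rewrite dot_sumr big1 // => l _.
by rewrite dotZr xh mulr0.
Qed.

Lemma dual_span : [set a | [forall b in span_of h, dot a b == 0]] = perp h.
Proof.
apply/setP => a; rewrite inE; apply/forall_inP/perpP => [ah l|ah b hb].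
  by apply/eqP/ah/mem_span_gen.
by rewrite (dot_perp_span (introT (perpP a) ah) hb).
Qed.

End Perp.

Lemma perp_span_subset n k1 k2 (h : 'I_k1 -> word n) (u : 'I_k2 -> word n) :
  (forall l, h l \in span_of u) -> perp u \subset perp h.
Proof. by move=> hu; apply/subsetP => x xu; apply/perpP => l; apply: dot_perp_span xu _. Qed.

Lemma perp_span_eq n k1 k2 (h : 'I_k1 -> word n) (u : 'I_k2 -> word n) :
  (forall l, h l \in span_of u) -> (forall l, u l \in span_of h) -> perp h = perp u.
Proof. by move=> hu uh; apply/eqP; rewrite eqEsubset !perp_span_subset. Qed.

Lemma C_perp : C = perp gD.
Proof. exact: dual_span. Qed.

Definition ext N n (sigma : 'I_n -> 'I_N) (v : word n) : word N :=
  \row_i (if [pick j | sigma j == i] is Some j then v 0 j else 0).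

Section RestrictionExtension.
Variables (N n : nat) (sigma : 'I_n -> 'I_N).
Hypothesis sigma_inj : injective sigma.

Lemma ext_sigma v j : ext sigma v 0 (sigma j) = v 0 j.
Proof. by rewrite mxE; case: pickP => [j' /eqP/sigma_inj -> //|/(_ j)]; rewrite eqxx. Qed.

Lemma ext_out v i : i \notin codom sigma -> ext sigma v 0 i = 0.
Proof. by move=> iNs; rewrite mxE; case: pickP => // j /eqP ji; rewrite -ji codom_f in iNs. Qed.

Lemma restr_ext v : restr sigma (ext sigma v) = v.
Proof. by apply/rowP => j; rewrite mxE ext_sigma. Qed.

Lemma supp_ext v : supp (ext sigma v) \subset codom sigma.
Proof. by apply/subsetP => i; rewrite inE; apply: contraR => /(ext_out v)->. Qed.

Lemma ext_restr a : supp a \subset codom sigma -> ext sigma (restr sigma a) = a.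
Proof.
move=> /subsetP a_sigma; apply/rowP => i.
have [/codomP[j ->]|iNs] := boolP (i \in codom sigma); first by rewrite ext_sigma mxE.
rewrite ext_out //; apply/esym/eqP; apply: contraR iNs => ai.
by apply: a_sigma; rewrite inE.
Qed.

Lemma dot_restr a b :
  supp a \subset codom sigma -> dot a b = dot (restr sigma a) (restr sigma b).
Proof.
move=> a_sigma; rewrite -{1}(ext_restr a_sigma); set v := restr sigma a.
rewrite !dotE (bigID (mem (sigma @: setT))) /= [X in _ + X]big1 ?addr0 => [|i iNs].
  rewrite big_imset /=; last by move=> j1 j2 _ _ /sigma_inj.
  by apply: eq_big => [j|j _]; rewrite ?inE ?ext_sigma ?mxE.
rewrite ext_out ?mul0r //; apply: contra iNs => /codomP[j ->].
exact: imset_f.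
Qed.

Lemma dot_ext v b : dot (ext sigma v) b = dot v (restr sigma b).
Proof. by rewrite (dot_restr _ (supp_ext v)) restr_ext. Qed.

Lemma restr_perp_supp k (g : 'I_k -> word N) :
  [set restr sigma a | a in [set a in perp g | supp a \subset codom sigma]]
    = perp (fun l => restr sigma (g l)).
Proof.
apply/setP => x; apply/imsetP/idP => [[a] | xg].
  by rewrite inE => /andP[/perpP ag a_sigma] ->; apply/perpP => l; rewrite -dot_restr.
exists (ext sigma x); last by rewrite restr_ext.
by rewrite inE supp_ext andbT; apply/perpP => l; rewrite dot_ext; move/perpP: xg.
Qed.

Lemma self_dual_ext k (g : 'I_k -> word N) (T : {set 'I_N}) (B : {set word n}) :
  T =i codom sigma -> self_dual_on setT B -> (forall l, restr sigma (g l) \in B) ->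
  exists S : {set word N},
    [/\ S \subset [set a in perp g | supp a \subset T], self_dual_on T S
      & code_iso T S B].
Proof.
move=> T_sigma B_self_dual gB.
have suppT a : (supp a \subset T) = (supp a \subset codom sigma).
  exact: eq_subset_r.
have B_orth v w : v \in B -> w \in B -> dot v w = 0.
  by move=> vB; rewrite B_self_dual inE => /andP[_ /forall_inP/(_ v vB)/eqP]; rewrite dotC.
exists [set ext sigma v | v in B]; split.
- apply/subsetP => _ /imsetP[v vB ->]; rewrite inE suppT supp_ext andbT.
  by apply/perpP => l; rewrite dot_ext B_orth.
- apply/setP => a; rewrite inE suppT; apply/idP/andP => [/imsetP[v vB ->]|[a_sigma]].
    split; first exact: supp_ext.
    by apply/forall_inP => _ /imsetP[w wB ->]; rewrite dot_ext restr_ext B_orth.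
  move=> /forall_inP a_orth; rewrite -(ext_restr a_sigma) imset_f //.
  rewrite B_self_dual inE subsetT; apply/forall_inP => w wB.
  by rewrite dotC -dot_ext dotC a_orth ?imset_f.
- exists sigma; split => //; apply/setP => v.
  apply/imsetP/idP => [[_ /imsetP[w wB ->] ->] | vB]; first by rewrite restr_ext.
  by exists (ext sigma v); rewrite ?imset_f ?restr_ext.
Qed.

End RestrictionExtension.

(* Words are related to Boolean descriptions on which spans can be compared by
   [vm_compute]; words themselves do not compute, matrices being locked. *)
Definition has_bits n (v : word n) (f : nat -> bool) : Prop :=
  forall j : 'I_n, v 0 j = (f j)%:R.

Lemma row_has_bits n (f : nat -> bool) : has_bits (\row_(j < n) (f j)%:R) f.
Proof. by move=> j; rewrite mxE. Qed.

Definition bits_of n (v : word n) : seq bool := [seq v 0 i != 0 | i <- enum 'I_n].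

Lemma has_bits_of n (v : word n) : has_bits v (nth false (bits_of v)).
Proof. by move=> j; rewrite (nth_map j) ?size_enum_ord // nth_ord_enum -F2_boolE. Qed.

Lemma all_iota_ord m (G : pred nat) : all G (iota 0 m) = [forall i : 'I_m, G i].
Proof.
apply/allP/forallP => [G_m i | G_m i]; first by apply: G_m; rewrite mem_iota ltn_ord.
by rewrite mem_iota => /= lt_im; apply: (G_m (Ordinal lt_im)).
Qed.

(* Tabulating [f] makes repeated lookups cheap under [vm_compute]. *)
Definition bit_table k n (f : nat -> nat -> bool) : seq (seq bool) :=
  [seq [seq f l j | j <- iota 0 n] | l <- iota 0 k].

Definition tab_entry (t : seq (seq bool)) (l j : nat) : bool := nth false (nth [::] t l) j.

Lemma bit_table_has_bits k n (h : 'I_k -> word n) (f : nat -> nat -> bool) :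
  (forall l, has_bits (h l) (f l)) -> forall l, has_bits (h l) (tab_entry (bit_table k n f) l).
Proof.
move=> hf l j; rewrite hf /tab_entry (nth_map 0) ?size_iota ?nth_iota //.
by rewrite (nth_map 0) ?size_iota ?nth_iota.
Qed.

Definition dot_bits (f g : nat -> bool) n : bool :=
  odd (count (fun j => f j && g j) (iota 0 n)).

Lemma dot_has_bits n (x y : word n) f g :
  has_bits x f -> has_bits y g -> dot x y = (dot_bits f g n)%:R.
Proof.
move=> xf yg; rewrite dotE -F2_sum_ord_bool.
by apply: eq_bigr => j _; rewrite xf yg F2_mul_bool.
Qed.

Fixpoint bitseqs n : seq (seq bool) :=
  if n is n'.+1 then [seq b :: a | b <- [:: false; true], a <- bitseqs n']
  else [:: [::]].

Lemma mem_bitseqs n a : (a \in bitseqs n) = (size a == n).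
Proof.
elim: n a => [|n IHn] [|b a] /=; rewrite ?mem_seq1 // !mem_cat in_nil orbF.
  by apply/norP; split; apply/mapP => -[].
rewrite eqSS -IHn; apply/orP/idP => [[] /mapP[a' a'_n [_ ->]] // | a_n].
by case: b; [right | left]; apply: map_f.
Qed.

Lemma bitseqs_uniq n : uniq (bitseqs n).
Proof.
have cons_inj (b : bool) : injective (cons b) by move=> ? ? [].
elim: n => //= n IHn; rewrite cat_uniq cats0 !(map_inj_uniq (cons_inj _)) IHn andbT.
by apply/hasPn => _ /mapP[a _ ->]; apply/mapP => -[].
Qed.

Definition lincomb_bits (f : nat -> nat -> bool) (a : seq bool) (j : nat) : bool :=
  odd (count (fun l => nth false a l && f l j) (iota 0 (size a))).

Lemma lincomb_has_bits k n (h : 'I_k -> word n) (f : nat -> nat -> bool) (a : seq bool) :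
  size a = k -> (forall l, has_bits (h l) (f l)) ->
  has_bits (\sum_(l < k) (nth false a l)%:R *: h l) (lincomb_bits f a).
Proof.
move=> size_a hf j; rewrite /lincomb_bits size_a -F2_sum_ord_bool summxE.
by apply: eq_bigr => l _; rewrite mxE hf F2_mul_bool.
Qed.

Lemma span_of_bits k n (h : 'I_k -> word n) v :
  v \in span_of h -> exists2 a, size a = k & v = \sum_(l < k) (nth false a l)%:R *: h l.
Proof.
case/imsetP => c _ ->; exists [seq c l != 0 | l <- enum 'I_k].
  by rewrite size_map size_enum_ord.
apply: eq_bigr => l _; congr (_ *: _).
by rewrite (nth_map l) ?size_enum_ord // nth_ord_enum -F2_boolE.
Qed.

Definition span_bits k (f : nat -> nat -> bool) n : seq (seq bool) :=
  [seq [seq lincomb_bits f a j | j <- iota 0 n] | a <- bitseqs k].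

Definition in_span_bits k (f : nat -> nat -> bool) (g : nat -> bool) n : bool :=
  [seq g j | j <- iota 0 n] \in span_bits k f n.

Lemma in_span_bitsP k n (h : 'I_k -> word n) (f : nat -> nat -> bool) v g :
  (forall l, has_bits (h l) (f l)) -> has_bits v g -> in_span_bits k f g n ->
  v \in span_of h.
Proof.
move=> hf vg /mapP[a]; rewrite mem_bitseqs => /eqP size_a /eq_in_map fa_g.
apply/imsetP; exists [ffun l : 'I_k => (nth false a l)%:R] => //.
under eq_bigr => l _ do rewrite ffunE.
apply/rowP => j; rewrite vg fa_g -?(lincomb_has_bits size_a hf) //.
by rewrite mem_iota ltn_ord.
Qed.

(* Each span is computed once, not once per generator tested against it. *)
Definition span_eq_bits k1 (f : nat -> nat -> bool) k2 (g : nat -> nat -> bool) n :=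
  let span_f := span_bits k1 f n in
  let span_g := span_bits k2 g n in
  all (fun l => [seq f l j | j <- iota 0 n] \in span_g) (iota 0 k1)
  && all (fun l => [seq g l j | j <- iota 0 n] \in span_f) (iota 0 k2).

Lemma perp_eq_bits k1 k2 n (h : 'I_k1 -> word n) (u : 'I_k2 -> word n)
    (f g : nat -> nat -> bool) :
  (forall l, has_bits (h l) (f l)) -> (forall l, has_bits (u l) (g l)) ->
  span_eq_bits k1 f k2 g n -> perp h = perp u.
Proof.
move=> hf ug /andP[]; rewrite !all_iota_ord => /forallP f_g /forallP g_f.
by apply: perp_span_eq => l;
  [exact: in_span_bitsP ug (hf l) (f_g l) | exact: in_span_bitsP hf (ug l) (g_f l)].
Qed.

Definition gH_bits (l t : nat) : bool :=
  match l with 0 => true | 1 => (t < 4)%N | 2 => ~~ odd (t %/ 2) | _ => ~~ odd t end.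

Lemma gH_has_bits l : has_bits (gH l) (gH_bits l).
Proof. by move=> t; rewrite mxE; case: l => [[|[|[|[|l]]]] ?]. Qed.

Lemma H8_perp : H8 = perp gH.
Proof.
have gH_orth : all (fun l => all (fun l' => ~~ dot_bits (gH_bits l) (gH_bits l') 8)
                                (iota 0 4)) (iota 0 4) by vm_compute.
have perp_in_span : all (fun a => all (fun l => ~~ dot_bits (nth false a) (gH_bits l) 8)
                                   (iota 0 4) ==> in_span_bits 4 gH_bits (nth false a) 8)
                        (bitseqs 8) by vm_compute.
have gH_perp l : gH l \in perp gH.
  apply/perpP => l'; rewrite (dot_has_bits (gH_has_bits l) (gH_has_bits l')).
  move: gH_orth; rewrite all_iota_ord => /forallP/(_ l).
  by rewrite all_iota_ord => /forallP/(_ l')/negbTE ->.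
apply/setP => y; apply/idP/perpP => [y_span l | y_perp].
  by rewrite dotC (dot_perp_span (gH_perp l) y_span).
apply: in_span_bitsP gH_has_bits (has_bits_of y) _.
have bits_y : bits_of y \in bitseqs 8 by rewrite mem_bitseqs size_map size_enum_ord.
apply: (implyP (allP perp_in_span _ bits_y)); rewrite all_iota_ord; apply/forallP => l.
rewrite -[dot_bits _ _ _]F2_bool_neq0 -(dot_has_bits (has_bits_of y) (gH_has_bits l)).
by rewrite y_perp eqxx.
Qed.

Definition word_at n (v : word n) (j : nat) : 'F_2 :=
  if insub j is Some i then v 0 i else 0.

Lemma word_atE n (v : word n) (i : 'I_n) : word_at v i = v 0 i.
Proof. by rewrite /word_at valK. Qed.

Lemma blk_idx_lt k (b : 'I_k) (t : 'I_8) : (b * 8 + t < 8 * k)%N.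
Proof. by have := ltn_ord b; have := ltn_ord t; lia. Qed.

Lemma blkE k (v : word (8 * k)) (b : 'I_k) (t : 'I_8) :
  blk v b 0 t = v 0 (Ordinal (blk_idx_lt b t)).
Proof. by rewrite mxE -word_atE. Qed.

Lemma dot_blk k (v w : word (8 * k)) : dot v w = \sum_(b < k) dot (blk v b) (blk w b).
Proof.
transitivity (\sum_(0 <= j < 8 * k) word_at v j * word_at w j).
  by rewrite dotE big_mkord; apply: eq_bigr => j _; rewrite !word_atE.
rewrite [X in index_iota 0 X]mulnC big_nat_mul big_mkord; apply: eq_bigr => b _.
rewrite -{1}[(b * 8)%N]add0n big_addn mulSn addnK big_mkord dotE.
by apply: eq_bigr => t _; rewrite !mxE addnC.
Qed.

Definition place k (b : nat) (y : word 8) : word (8 * k) :=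
  \row_(j < 8 * k) (if (j %/ 8 == b)%N then word_at y (j %% 8) else 0).

Lemma blk_place k (b b' : 'I_k) y : blk (place k b y) b' = if b' == b then y else 0.
Proof.
apply/rowP => t; rewrite blkE mxE /= divnMDl // modnMDl divn_small // modn_small //.
by rewrite addn0 word_atE val_eqE; case: eqP; rewrite ?mxE.
Qed.

Lemma H8sum_self_dual k : self_dual_on setT (H8sum k).
Proof.
apply/setP => x; rewrite [in RHS]inE subsetT /=.
apply/idP/forall_inP => [xH w wH | x_orth].
  rewrite dot_blk big1 // => b _; apply: (dot_perp_span (h := gH)).
    by rewrite -H8_perp; move: xH; rewrite inE => /forallP.
  by move: wH; rewrite inE => /forallP.
rewrite inE; apply/forallP => b; rewrite H8_perp; apply/perpP => l.
have placeH : place k b (gH l) \in H8sum k.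
  rewrite inE; apply/forallP => b'; rewrite blk_place.
  case: eqP => _; first exact: mem_span_gen.
  by rewrite H8_perp; apply/perpP => l'; rewrite dotC dot0r.
move/eqP: (x_orth _ placeH); rewrite dot_blk (bigD1 b) //= blk_place eqxx big1 ?addr0 //.
by move=> b' /negbTE nb'b; rewrite blk_place nb'b dot0r.
Qed.

Definition set_bits m (T : {set 'I_m}) : seq bool := [seq i \in T | i <- enum 'I_m].

Lemma nth_set_bits m (T : {set 'I_m}) (i : 'I_m) : nth false (set_bits T) i = (i \in T).
Proof. by rewrite (nth_map i) ?nth_ord_enum // size_enum_ord. Qed.

Lemma size_set_bits m (T : {set 'I_m}) : size (set_bits T) = m.
Proof. by rewrite size_map size_enum_ord. Qed.

Lemma set_bits_in m (T : {set 'I_m}) : set_bits T \in bitseqs m.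
Proof. by rewrite mem_bitseqs size_set_bits. Qed.

Lemma card_set_bits m (T : {set 'I_m}) : #|T| = count id (set_bits T).
Proof. by rewrite count_map -sum1_count big_enum_cond /= sum1_card. Qed.

Lemma sum_set_bits m (F : seq bool -> 'F_2) :
  \sum_(T : {set 'I_m}) F (set_bits T) = \sum_(a <- bitseqs m) F a.
Proof.
have set_bits_inj : injective (@set_bits m).
  by move=> T1 T2 eqT; apply/setP => i; rewrite -!nth_set_bits eqT.
rewrite -(big_map (@set_bits m) xpredT F); apply: perm_big; apply: uniq_perm.
- by rewrite map_inj_uniq ?index_enum_uniq.
- exact: bitseqs_uniq.
move=> a; apply/mapP/idP => [[T _ ->]|]; first exact: set_bits_in.
rewrite mem_bitseqs => /eqP size_a; exists [set i : 'I_m | nth false a i].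
  by rewrite mem_index_enum.
set T := finset _; apply: (@eq_from_nth _ false) => [|i]; first by rewrite (size_set_bits T).
rewrite size_a => lt_im.
by rewrite -[i]/(val (Ordinal lt_im)) nth_set_bits inE.
Qed.

Definition monom_bits m (a : seq bool) (j : nat) : bool :=
  all (fun i => nth false a i ==> odd (j %/ 2 ^ i)) (iota 0 m).

Definition subcube_bits m (a : seq bool) (j : nat) : bool :=
  all (fun i => odd (j %/ 2 ^ i) ==> nth false a i) (iota 0 m).

Definition subcube m (T : {set 'I_m}) : word (2 ^ m) :=
  \row_j (subcube_bits m (set_bits T) j)%:R.

Lemma monom_has_bits m (T : {set 'I_m}) : has_bits (monom T) (monom_bits m (set_bits T)).
Proof.
move=> j; rewrite mxE /monom_bits all_iota_ord.
have [/forallP T_j|] := boolP [forall i : 'I_m, nth false (set_bits T) i ==> odd (j %/ 2 ^ i)].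
  by rewrite big1 // => i iT; move/implyP: (T_j i); rewrite nth_set_bits => /(_ iT) ->.
case/forallPn => i; rewrite nth_set_bits negb_imply => /andP[iT /negbTE odd_ji].
by rewrite (bigD1 i) //= odd_ji mul0r.
Qed.

(* Over F_2 the monomials and the subcube indicators are dual bases (Moebius inversion
   in the Boolean lattice: 2^(|j| - |i|) sets lie between the supports of i and j). *)
Definition mobius_bits m : bool :=
  all (fun i => all (fun j =>
        odd (count (fun a => subcube_bits m a i && monom_bits m a j) (bitseqs m)) == (i == j))
      (iota 0 (2 ^ m))) (iota 0 (2 ^ m)).

Lemma monom_expansion m (x : word (2 ^ m)) : mobius_bits m ->
  x = \sum_(T : {set 'I_m}) dot x (subcube T) *: monom T.
Proof.
move=> mobius; apply/rowP => j.
have kronecker i : \sum_(T : {set 'I_m}) subcube T 0 i * monom T 0 j = (i == j)%:R.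
  under eq_bigr => T _ do rewrite mxE monom_has_bits F2_mul_bool.
  rewrite (sum_set_bits m (fun a => (subcube_bits m a i && monom_bits m a j)%:R)) F2_sum_bool.
  move: mobius; rewrite /mobius_bits all_iota_ord => /forallP/(_ i).
  by rewrite all_iota_ord => /forallP/(_ j)/eqP ->.
transitivity (\sum_i x 0 i * (i == j)%:R).
  by rewrite (bigD1 j) //= eqxx mulr1 big1 ?addr0 // => i /negbTE->; rewrite mulr0.
rewrite summxE; under [RHS]eq_bigr => T _ do rewrite mxE dotE mulr_suml.
rewrite exchange_big; apply: eq_bigr => i _.
by rewrite -kronecker mulr_sumr; apply: eq_bigr => T _; rewrite mulrA.
Qed.

Lemma RM_eq_perp r m k (u : 'I_k -> word (2 ^ m)) (g : nat -> nat -> bool) :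
  (forall l, has_bits (u l) (g l)) -> mobius_bits m ->
  all (fun a => (count id a <= r)%N ==>
         all (fun l => ~~ dot_bits (monom_bits m a) (g l) (2 ^ m)) (iota 0 k)) (bitseqs m) ->
  all (fun a => (r < count id a)%N ==> in_span_bits k g (subcube_bits m a) (2 ^ m))
      (bitseqs m) ->
  RM r m = perp u.
Proof.
move=> ug mobius low_orth high_span; apply/setP => x; apply/imsetP/idP => [[c _ ->] | x_perp].
  apply/perpP => l; rewrite dotC dot_sumr big1 // => T; rewrite card_set_bits => low_T.
  rewrite dotZr (dot_has_bits (ug l) (monom_has_bits T)).
  move/implyP: (allP low_orth _ (set_bits_in T)) => /(_ low_T).
  rewrite all_iota_ord => /forallP/(_ l).
  by rewrite /dot_bits (eq_count (fun j => andbC _ _)) => /negbTE ->; rewrite mulr0.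
exists [ffun T => dot x (subcube T)] => //.
rewrite [LHS](monom_expansion x mobius) (bigID (fun T : {set 'I_m} => #|T| <= r)%N) /=.
rewrite [X in _ + X]big1 ?addr0 => [|T]; first by apply: eq_bigr => T _; rewrite ffunE.
rewrite -ltnNge card_set_bits => high_T.
rewrite (dot_perp_span x_perp) ?scale0r //.
apply: in_span_bitsP ug (row_has_bits _) _.
exact: implyP (allP high_span _ (set_bits_in T)) high_T.
Qed.

Definition rm1_bits (l j : nat) : bool := if l is l'.+1 then odd (j %/ 2 ^ l') else true.

Definition rm1 m (l : 'I_m.+1) : word (2 ^ m) := \row_j (rm1_bits l j)%:R.

Lemma RM_2_4_perp : RM 2 4 = perp (@rm1 4).
Proof. by apply: RM_eq_perp (fun l => row_has_bits _) _ _ _; vm_compute. Qed.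

Lemma RM_3_5_perp : RM 3 5 = perp (@rm1 5).
Proof. by apply: RM_eq_perp (fun l => row_has_bits _) _ _ _; vm_compute. Qed.

Lemma dot_ones n (z : word n) : dot z (const_mx 1) = (odd (wt z))%:R.
Proof.
rewrite dotE -F2_natr_odd /wt -sum1_card natr_sum [RHS]big_mkcond /=.
apply: eq_bigr => t _; rewrite mxE mulr1 inE.
by have [->|nz] := eqVneq (z 0 t) 0; rewrite ?eqxx // [LHS]F2_boolE nz.
Qed.

Definition code24_dual_bits (l j : nat) : bool :=
  if (l < 3)%N then (j %/ 8 == l)%N else gH_bits (l - 3) (j %% 8).

Definition code24_dual (l : 'I_7) : word 24 := \row_j (code24_dual_bits l j)%:R.

Lemma blk_code24_dual (l : 'I_7) (b : 'I_3) :
  blk (code24_dual l) b =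
    if (l < 3)%N then (if (b == l :> nat) then const_mx 1 else 0) else gH (inord (l - 3)).
Proof.
apply/rowP => t; rewrite (@blkE 3) !mxE /code24_dual_bits /=.
rewrite divnMDl // modnMDl divn_small // modn_small // addn0.
case: ifP => [_|l_ge3]; first by case: (b == l :> nat); rewrite !mxE.
by rewrite gH_has_bits inordK //; have := ltn_ord l; lia.
Qed.

Lemma dot_code24_dual (v : word 24) (l : 'I_7) :
  dot v (code24_dual l) =
    if (l < 3)%N then (odd (wt (blk v l)))%:R
    else dot (blk v 0 + blk v 1 + blk v 2) (gH (inord (l - 3))).
Proof.
rewrite (@dot_blk 3); under eq_bigr => b _ do rewrite blk_code24_dual.
case: ifP => l_lt3; last first.
  rewrite dotC !dotDr !big_ord_recr big_ord0 /= !(dotC (gH _)).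
  by rewrite -[0 + _]/(GRing.add 0 _) add0r.
rewrite (bigD1 (Ordinal l_lt3)) //= eqxx dot_ones big1 ?addr0 // => b ne_bl.
by rewrite ifN ?dot0r //; apply: contraNneq ne_bl => eq_bl; apply: val_inj.
Qed.

Lemma Code24_perp : Code24 = perp code24_dual.
Proof.
apply/setP => v; rewrite !inE H8_perp inE.
apply/andP/forallP => [[/forallP even_v /forallP sumH] l | v_perp].
  rewrite dot_code24_dual; case: ifP => [l_lt3|_]; last exact: sumH.
  by move: (even_v (Ordinal l_lt3)) => /negbTE /= ->.
split; apply/forallP.
  move=> b; have b_lt7 : (b < 7)%N by have := ltn_ord b; lia.
  move: (v_perp (Ordinal b_lt7)); rewrite dot_code24_dual /= ltn_ord.
  by case: (odd _); rewrite ?oner_eq0.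
move=> l; have l3_lt7 : (l + 3 < 7)%N by have := ltn_ord l; lia.
move: (v_perp (Ordinal l3_lt7)); rewrite dot_code24_dual /= ifN; last by lia.
by have -> : inord (l + 3 - 3) = l by apply: val_inj; rewrite /= addnK inordK.
Qed.

Lemma wt_eq0 n (v : word n) : (wt v == 0)%N = (v == 0).
Proof.
rewrite /wt cards_eq0; apply/eqP/eqP => [supp0 | ->]; last first.
  by apply/setP => i; rewrite !inE mxE eqxx.
apply/rowP => i; rewrite mxE; apply/eqP; apply: contraT => nz.
by move: (in_set0 i); rewrite -supp0 inE nz.
Qed.

Lemma Cb_full beta : wt beta = 48%N -> Cb beta = C.
Proof.
rewrite /wt => wt48; have suppT : supp beta = setT.
  by apply/eqP; rewrite eqEcard subsetT cardsT card_ord wt48.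
by apply/setP => a; rewrite inE suppT subsetT andbT.
Qed.

Definition gD_bits (l i : nat) : bool :=
  match l with
  | 0 => (i < 16)%N | 1 => (16 <= i < 32)%N | 2 => (32 <= i)%N
  | 3 => odd (i %/ 8) | 4 => odd (i %/ 4) | 5 => odd (i %/ 2) | _ => odd i
  end.

Lemma gD_has_bits l : has_bits (gD l) (gD_bits l).
Proof. by move=> i; rewrite mxE; case: l => [[|[|[|[|[|[|[|l]]]]]]] ?]. Qed.

Definition in_H8sum_bits K (f : nat -> nat -> bool) k : bool :=
  all (fun l => all (fun b => in_span_bits 4 gH_bits (fun t => f l (b * 8 + t)) 8)
                    (iota 0 k)) (iota 0 K).

Lemma in_H8sum_bitsP K k (h : 'I_K -> word (8 * k)) (f : nat -> nat -> bool) :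
  (forall l, has_bits (h l) (f l)) -> in_H8sum_bits K f k -> forall l, h l \in H8sum k.
Proof.
move=> hf; rewrite /in_H8sum_bits all_iota_ord => /forallP hH l.
rewrite inE; apply/forallP => b; move: (hH l); rewrite all_iota_ord => /forallP/(_ b).
by apply: in_span_bitsP gH_has_bits _ => t; rewrite blkE hf.
Qed.

Definition sig_of N (s : seq nat) n (j : 'I_n) : 'I_N.+1 := inord (nth 0%N s j).

Section SupportList.
Variables (N : nat) (s : seq nat) (n : nat).
Hypotheses (s_uniq : uniq s) (s_lt : all (fun i => i < N.+1)%N s) (size_s : size s = n).

Lemma sig_ofE (j : 'I_n) : sig_of N s j = nth 0%N s j :> nat.
Proof. by rewrite inordK // (allP s_lt) // mem_nth // size_s. Qed.

Lemma sig_of_inj : injective (@sig_of N s n).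
Proof.
move=> j1 j2 /(congr1 (@nat_of_ord _)); rewrite !sig_ofE => /eqP.
by rewrite nth_uniq ?size_s // => /eqP/val_inj.
Qed.

Lemma codom_sig_of (i : 'I_N.+1) : (i \in codom (@sig_of N s n)) = ((i : nat) \in s).
Proof.
apply/codomP/idP => [[j ->] | i_s]; first by rewrite sig_ofE mem_nth ?size_s.
have idx_lt : (index (val i) s < n)%N by rewrite -size_s index_mem.
by exists (Ordinal idx_lt); apply: ord_inj; rewrite sig_ofE nth_index.
Qed.

Lemma restr_sig_of_has_bits (v : word N.+1) f :
  has_bits v f -> has_bits (restr (@sig_of N s n) v) (fun j => f (nth 0%N s j)).
Proof. by move=> vf j; rewrite mxE vf sig_ofE. Qed.

End SupportList.

Definition restr_gD_table (s : seq nat) : seq (seq bool) :=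
  bit_table 7 (size s) (fun l j => gD_bits l (nth 0%N s j)).

Section SupportOfBeta.
Variables (beta : word 48) (s : seq nat).
Hypotheses (s_uniq : uniq s) (s_lt : all (fun i => i < 48)%N s).
Hypothesis supp_beta : forall i : 'I_48, (i \in supp beta) = ((i : nat) \in s).

Lemma wt_support : wt beta = size s.
Proof.
rewrite /wt cardE -(size_map (@nat_of_ord 48)); apply: perm_size.
apply: uniq_perm => //; first by rewrite map_inj_uniq ?enum_uniq //; apply: ord_inj.
move=> i; apply/mapP/idP => [[j] | i_s]; first by rewrite mem_enum supp_beta => ? ->.
have i_lt : (i < 48)%N by apply: (allP s_lt).
by exists (Ordinal i_lt); rewrite ?mem_enum ?supp_beta.
Qed.

Lemma supp_beta_codom n : size s = n -> supp beta =i codom (@sig_of 47 s n).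
Proof. by move=> size_s i; rewrite supp_beta (codom_sig_of s_lt size_s). Qed.

Lemma restr_gD_has_bits n (size_s : size s = n) l :
  has_bits (restr (@sig_of 47 s n) (gD l)) (tab_entry (restr_gD_table s) l).
Proof.
rewrite /restr_gD_table size_s; move: l.
apply: (bit_table_has_bits (h := fun l => restr (@sig_of 47 s n) (gD l))) => l.
exact (restr_sig_of_has_bits s_lt size_s (gD_has_bits l)).
Qed.

Lemma Cb_iso_perp n k (u : 'I_k -> word n) (g : nat -> nat -> bool) :
  size s = n -> (forall l, has_bits (u l) (g l)) ->
  span_eq_bits 7 (tab_entry (restr_gD_table s)) k g n ->
  code_iso (supp beta) (Cb beta) (perp u).
Proof.
move=> size_s ug span_eq; set sigma := @sig_of 47 s n.
have sigma_inj : injective sigma := sig_of_inj s_uniq s_lt size_s.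
exists sigma; split => //; first exact: supp_beta_codom.
have -> : Cb beta = [set a in perp gD | supp a \subset codom sigma].
  by apply/setP => a; rewrite /Cb C_perp !inE (eq_subset_r (supp_beta_codom size_s)).
rewrite restr_perp_supp //.
exact: perp_eq_bits (restr_gD_has_bits size_s) ug span_eq.
Qed.

Lemma Cb_H8sum_subcode k :
  size s = (8 * k)%N -> in_H8sum_bits 7 (tab_entry (restr_gD_table s)) k ->
  exists S : {set word 48},
    [/\ S \subset Cb beta, self_dual_on (supp beta) S & code_iso (supp beta) S (H8sum k)].
Proof.
move=> size_s H8_bits.
have gD_H8sum := in_H8sum_bitsP (restr_gD_has_bits size_s) H8_bits.
have := self_dual_ext (sig_of_inj s_uniq s_lt size_s) (supp_beta_codom size_s)
          (H8sum_self_dual k) gD_H8sum.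
by rewrite /Cb C_perp.
Qed.

End SupportOfBeta.

Definition support_bits (a : seq bool) : seq nat :=
  filter (lincomb_bits gD_bits a) (iota 0 48).

(* [f] tabulates the generators of D restricted to a support of size [n]. *)
Definition dual_model_bits (n : nat) (f : nat -> nat -> bool) : bool :=
  match n with
  | 16 => span_eq_bits 7 f 5 (tab_entry (bit_table 5 16 rm1_bits)) 16
  | 24 => span_eq_bits 7 f 7 (tab_entry (bit_table 7 24 code24_dual_bits)) 24
  | 32 => span_eq_bits 7 f 6 (tab_entry (bit_table 6 32 rm1_bits)) 32
  | _ => true
  end.

Definition support_ok (s : seq nat) : bool :=
  let f := tab_entry (restr_gD_table s) in
  dual_model_bits (size s) f
  && ((size s != 0) ==> (8 %| size s)%N && in_H8sum_bits 7 f (size s %/ 8)).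

Lemma support_ok_D : all (fun a => support_ok (support_bits a)) (bitseqs 7).
Proof. by vm_compute. Qed.

Theorem proposition6 : forall beta : word 48, beta \in D ->
  [/\ wt beta = 16%N -> code_iso (supp beta) (Cb beta) (RM 2 4),
      wt beta = 24%N -> code_iso (supp beta) (Cb beta) Code24,
      wt beta = 32%N -> code_iso (supp beta) (Cb beta) (RM 3 5),
      wt beta = 48%N -> Cb beta = C
    & beta != 0 ->
      exists S : {set word 48},
        [/\ S \subset Cb beta, self_dual_on (supp beta) S
          & code_iso (supp beta) S (H8sum (wt beta %/ 8))]].
Proof.
move=> beta /span_of_bits[a size_a beta_a].
have := allP support_ok_D a; rewrite mem_bitseqs size_a eqxx => /(_ isT).
set s := support_bits a; have s_uniq : uniq s by rewrite filter_uniq ?iota_uniq.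
have s_lt : all (fun i => i < 48)%N s.
  by apply/allP => i; rewrite mem_filter mem_iota => /andP[].
have supp_beta (i : 'I_48) : (i \in supp beta) = ((i : nat) \in s).
  rewrite inE beta_a (lincomb_has_bits size_a gD_has_bits) F2_bool_neq0.
  by rewrite /s /support_bits mem_filter mem_iota /= ltn_ord andbT.
have wt_s := wt_support s_uniq s_lt supp_beta.
have iso := Cb_iso_perp s_uniq s_lt supp_beta.
have rows := bit_table_has_bits (fun l => row_has_bits _).
rewrite /support_ok -wt_s => /andP[dual_bits H8sum_bits].
split=> [wt16 | wt24 | wt32 | | nz].
- rewrite wt16 in dual_bits; rewrite RM_2_4_perp.
  by apply: iso _ (rows _ _ _) dual_bits; rewrite -wt_s.
- rewrite wt24 in dual_bits; rewrite Code24_perp.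
  by apply: iso _ (rows _ _ _) dual_bits; rewrite -wt_s.
- rewrite wt32 in dual_bits; rewrite RM_3_5_perp.
  by apply: iso _ (rows _ _ _) dual_bits; rewrite -wt_s.
- exact: Cb_full.
move: H8sum_bits; rewrite wt_eq0 nz => /andP[dvd8 H8_bits].
by apply: Cb_H8sum_subcode s_uniq s_lt supp_beta _ _ H8_bits; rewrite -wt_s mulnC divnK.
Qed.
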